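(* Let $X$ be a connected non-bipartite graph with $n$ vertices and $m>n$ edges, and let $\{a,b\}\ne\{\alpha,\beta\}$ be edges of $X$. If $\mathbf f_{ab}$ and $\mathbf f_{\alpha\beta}$ are strongly cospectral with respect to the adjacency matrix of the line graph $\mathcal L(X)$, then the graph obtained from $X$ by deleting the edges $\{a,b\}$ and $\{\alpha,\beta\}$ is either disconnected or bipartite.
   Context: The line graph $\mathcal L(X)$ has vertex set $E(X)$ with edges adjacent iff they share an endpoint; $\mathbf f_{ab}$ is the vertex state of the vertex corresponding to $\{a,b\}$. For $M=\sum_\theta\theta F_\theta$ (orthogonal spectral projections), vectors $\mathbf x,\mathbf y$ are strongly cospectral if $F_\theta\mathbf x=\pm F_\theta\mathbf y$ for every eigenvalue $\theta$. *)

From HB Require Import structures.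
From mathcomp Require Import all_boot all_order all_algebra.
From mathcomp Require Import reals.
Set Implicit Arguments. Unset Strict Implicit. Unset Printing Implicit Defensive.
Import Order.TTheory GRing.Theory Num.Theory.
Local Open Scope ring_scope.

Section Graphs.
Variable V : finType.

Definition simple_graph (adj : rel V) : Prop := symmetric adj /\ irreflexive adj.

Definition edgeset (adj : rel V) : {set {set V}} :=
  [set [set x; y] | x in V, y in V & adj x y].

Definition edge (adj : rel V) := {e : {set V} | e \in edgeset adj}.

Definition connected_graph (adj : rel V) : Prop := forall x y : V, connect adj x y.

Definition bipartite (adj : rel V) : Prop :=
  exists c : V -> bool, forall x y, adj x y -> c x != c y.

Definition delete2 (adj : rel V) (e1 e2 : {set V}) : rel V :=
  fun x y => [&& adj x y, [set x; y] != e1 & [set x; y] != e2].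

(* Adjacency matrix of the line graph L(X), vertices indexed by 'I_#|edge adj|
   via the enumeration of the finite type of edges: two distinct edges are
   adjacent iff they share an endpoint. *)
Definition line_adj (R : nzRingType) (adj : rel V) : 'M[R]_#|{: edge adj}| :=
  \matrix_(i, j) (if (i != j) &&
                     (val (enum_val i : edge adj) :&: val (enum_val j : edge adj) != set0)
                  then 1 else 0).

Definition vstate (R : nzRingType) (adj : rel V) (e : edge adj) : 'rV[R]_#|{: edge adj}| :=
  delta_mx 0 (enum_rank e).
End Graphs.

(* Orthogonal projection (acting on row vectors by right multiplication)
   onto the row space of a matrix B with linearly independent rows:
   P = B^T (B B^T)^{-1} B. *)
Definition orth_proj (R : fieldType) (r n : nat) (B : 'M[R]_(r, n)) : 'M[R]_n :=
  B^T *m invmx (B *m B^T) *m B.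

Definition spec_proj (R : fieldType) (n : nat) (M : 'M[R]_n) (theta : R) : 'M[R]_n :=
  orth_proj (row_base (eigenspace M theta)).

Definition strongly_cospectral (R : fieldType) (n : nat) (M : 'M[R]_n) (x y : 'rV[R]_n) : Prop :=
  forall theta : R, eigenvalue M theta ->
    x *m spec_proj M theta = y *m spec_proj M theta \/
    x *m spec_proj M theta = - (y *m spec_proj M theta).

From HB Require Import structures.
From mathcomp Require Import all_boot all_order all_algebra.
From mathcomp Require Import reals.
From Stdlib Require Import Classical.
Set Implicit Arguments. Unset Strict Implicit. Unset Printing Implicit Defensive.
Import Order.TTheory GRing.Theory Num.Theory.
Local Open Scope ring_scope.

(* Write N for the vertex-edge incidence matrix of X, so that the adjacency
   matrix of L(X) is N N^T - 2I.  If X - {e1, e2} is connected and not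
   bipartite, there is an edge weighting w with w N = 0, w(e1) = 1 and
   w(e2) = 0: by duality it suffices that a vertex labelling z with
   z(x) + z(y) = 0 on every edge of X - {e1, e2} vanishes, and an odd cycle
   forces z = -z.  Such a w is a -2 eigenvector of L(X), so the spectral
   idempotent F of -2 satisfies (F f_e) w^T = f_e w^T = w(e); thus
   F f_e1 = +-F f_e2 would give 1 = +-0. *)

Section OrthogonalProjection.
Variable R : realFieldType.

Lemma row_free_unit_mul_tr r n (B : 'M[R]_(r, n)) :
  row_free B -> B *m B^T \in unitmx.
Proof.
move=> freeB; rewrite -row_free_unit -kermx_eq0; apply/eqP/row_matrixP => k.
rewrite row0; apply: (row_free_inj freeB); rewrite mul0mx.
set x := row k _; have /sub_kermxP xBBt0 : (x <= kermx (B *m B^T))%MS by exact: row_sub.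
set y := x *m B; have : (y *m y^T) 0 0 = 0.
  by rewrite /y trmx_mul mulmxA -(mulmxA x) xBBt0 mul0mx mxE.
clearbody y; rewrite mxE => /eqP; rewrite psumr_eq0 => [/allP y0|i _]; last first.
  by rewrite mxE -expr2 sqr_ge0.
apply/rowP => j; have /implyP := y0 j (mem_index_enum j).
by rewrite mxE -expr2 sqrf_eq0 => /(_ isT)/eqP ->; rewrite mxE.
Qed.

Lemma trmx_orth_proj r n (B : 'M[R]_(r, n)) : (orth_proj B)^T = orth_proj B.
Proof. by rewrite /orth_proj !trmx_mul trmxK trmx_inv trmx_mul trmxK mulmxA. Qed.

Lemma orth_proj_id r n (B : 'M[R]_(r, n)) (w : 'rV[R]_n) :
  row_free B -> (w <= B)%MS -> w *m orth_proj B = w.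
Proof.
move=> freeB /submxP [D ->]; rewrite /orth_proj !mulmxA -(mulmxA D B) -(mulmxA D).
by rewrite mulmxV ?row_free_unit_mul_tr // mulmx1.
Qed.

Lemma spec_proj_mul_tr n (M : 'M[R]_n) theta (x w : 'rV[R]_n) :
  w *m M = theta *: w -> (x *m spec_proj M theta) *m w^T = x *m w^T.
Proof.
move=> /eigenspaceP w_eig; rewrite -mulmxA /spec_proj -trmx_orth_proj -trmx_mul.
by rewrite orth_proj_id ?row_base_free ?eq_row_base.
Qed.

Lemma strongly_cospectral_eigenvector n (M : 'M[R]_n) (x y w : 'rV[R]_n) theta :
  strongly_cospectral M x y -> w != 0 -> w *m M = theta *: w ->
  x *m w^T = y *m w^T \/ x *m w^T = - (y *m w^T).
Proof.
move=> xy_sc w_neq0 w_eig.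
have /xy_sc [] : eigenvalue M theta by apply/eigenvalueP; exists w.
  by move=> /(congr1 (mulmx^~ w^T)); rewrite !spec_proj_mul_tr // => ->; left.
by move=> /(congr1 (mulmx^~ w^T)); rewrite mulNmx !spec_proj_mul_tr // => ->; right.
Qed.

End OrthogonalProjection.

Lemma annihilators_submx (F : fieldType) m n (A : 'M[F]_(m, n)) (t : 'rV[F]_n) :
  (forall u : 'cV[F]_n, A *m u = 0 -> t *m u = 0) -> (t <= A)%MS.
Proof.
move=> tA; rewrite submxE; apply/eqP/matrixP => i j; rewrite [RHS]mxE.
have : t *m (cokermx A *m delta_mx j (0 : 'I_1)) = 0.
  by apply: tA; rewrite mulmxA mulmx_coker mul0mx.
by rewrite mulmxA -colE => /colP/(_ i); rewrite !mxE.
Qed.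

Lemma sum_mem_natr (R : pzSemiRingType) (T : finType) (A : {set T}) :
  \sum_v (v \in A)%:R = #|A|%:R :> R.
Proof.
rewrite -sum1_card natr_sum [RHS]big_mkcond.
by apply: eq_bigr => v _; case: (v \in A).
Qed.

Lemma sum_enum_val (R : nmodType) (T : finType) (F : T -> R) :
  \sum_(j < #|{: T}|) F (enum_val j) = \sum_v F v.
Proof.
rewrite (reindex (@enum_rank T)) /=; last exact: onW_bij (@enum_rank_bij T).
by apply: eq_bigr => v _; rewrite enum_rankK.
Qed.

Section LineGraph.
Variables (V : finType) (adj : rel V).
Hypothesis adj_simple : simple_graph adj.

Lemma adj_neq x y : adj x y -> x != y.
Proof. by case: adj_simple => _ irr xy; apply: contraTneq xy => ->; rewrite irr. Qed.

Lemma edge_set2 (e : edge adj) : exists x y, adj x y /\ val e = [set x; y].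
Proof. by case: e => /= e /imset2P [x y _]; rewrite inE => xy ->; exists x, y. Qed.

Lemma mem_edgeset x y : adj x y -> [set x; y] \in edgeset adj.
Proof. by move=> xy; apply/imset2P; exists x y; rewrite ?inE. Qed.

Lemma card_edge (e : edge adj) : #|val e| = 2.
Proof. by have [x [y [xy ->]]] := edge_set2 e; rewrite cards2 adj_neq. Qed.

Lemma card_meet_edges (e f : edge adj) : e != f -> (#|val e :&: val f| <= 1)%N.
Proof.
move=> /eqP ef; rewrite leqNgt; apply/negP => two_common; apply/ef/val_inj.
have card_ef : #|val e :&: val f| = #|val e|.
  by apply/eqP; rewrite eqn_leq subset_leq_card ?subsetIl // card_edge.
move/(subset_cardP card_ef): (subsetIl (val e) (val f)) => meet_e.
have e_sub_f : val e \subset val f.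
  by apply/subsetP => v ve; move: (meet_e v); rewrite ve inE => /andP[].
by apply/eqP; rewrite eqEcard e_sub_f !card_edge.
Qed.

Definition incidence (R : nzRingType) : 'M[R]_(#|{: edge adj}|, #|{: V}|) :=
  \matrix_(i, j) ((enum_val j : V) \in val (enum_val i : edge adj))%:R.

Lemma incidence_mul_tr (R : nzRingType) i k :
  (incidence R *m (incidence R)^T) i k = #|val (enum_val i) :&: val (enum_val k)|%:R.
Proof.
rewrite mxE -sum_mem_natr -[RHS]sum_enum_val; apply: eq_bigr => j _.
by rewrite !mxE inE -natrM mulnb.
Qed.

Lemma line_adj_incidence (R : nzRingType) :
  line_adj R adj = incidence R *m (incidence R)^T - 2%:M.
Proof.
apply/matrixP => i k; rewrite [RHS]mxE incidence_mul_tr !mxE.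
have [<-|ik] := eqVneq i k; first by rewrite setIid card_edge subrr.
have /card_meet_edges : enum_val i != enum_val k :> edge adj.
  by rewrite (inj_eq enum_val_inj).
rewrite subr0 -cards_eq0 leq_eqVlt ltnS leqn0; case/orP => /eqP -> //.
Qed.

Lemma incidence_mul_col (R : nzRingType) (z : 'cV[R]_#|{: V}|) (e : edge adj) x y :
  adj x y -> val e = [set x; y] ->
  (incidence R *m z) (enum_rank e) 0 = z (enum_rank x) 0 + z (enum_rank y) 0.
Proof.
move=> xy e_xy; rewrite mxE (reindex (@enum_rank V)) /=; last first.
  exact: onW_bij (@enum_rank_bij V).
rewrite (bigD1 x) // (bigD1 y) ?(eq_sym y) ?adj_neq //= big1 => [|v /andP[vx vy]].
  by rewrite !mxE !enum_rankK e_xy !inE !eqxx orbT addr0 !mul1r.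
by rewrite !mxE !enum_rankK e_xy !inE (negbTE vx) (negbTE vy) mul0r.
Qed.

Lemma incidence_kernel_eigen (R : comNzRingType) (w : 'rV[R]_#|{: edge adj}|) :
  w *m incidence R = 0 -> w *m line_adj R adj = - 2 *: w.
Proof.
move=> w0; rewrite line_adj_incidence mulmxBr mulmxA w0 mul0mx sub0r.
by rewrite mul_mx_scalar scaleNr.
Qed.

End LineGraph.

Lemma alternating_eq0 (R : numDomainType) (V : finType) (e : rel V) (z : V -> R) :
  connected_graph e -> ~ bipartite e -> (forall x y, e x y -> z x + z y = 0) ->
  forall v, z v = 0.
Proof.
move=> conn nbip zE v0; apply/eqP/negPn/negP => zv0_neq0.
have zN x y : e x y -> z y = - z x by move/zE/eqP; rewrite addrC addr_eq0 => /eqP.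
have z_pm v : (z v == z v0) || (z v == - z v0).
  have pm_closed : closed e [pred v | (z v == z v0) || (z v == - z v0)].
    by move=> x y /zN zy; rewrite !inE zy eqr_opp eqr_oppLR orbC.
  by have := closed_connect pm_closed (conn v0 v); rewrite !inE eqxx => <-.
apply: nbip; exists (fun v => z v == z v0) => x y /zN ->.
by case/orP: (z_pm x) => /eqP ->; rewrite ?opprK eqxx eqNr (negbTE zv0_neq0).
Qed.

Section DeletedEdges.
Variables (R : numFieldType) (V : finType) (adj : rel V) (e1 e2 : edge adj).
Hypotheses (adj_simple : simple_graph adj) (e1_neq_e2 : e1 != e2).
Let adj' := delete2 adj (val e1) (val e2).

Lemma exists_incidence_kernel_row :
  connected_graph adj' -> ~ bipartite adj' ->
  exists w : 'rV[R]_#|{: edge adj}|,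
    [/\ w *m incidence adj R = 0, w 0 (enum_rank e1) = 1 & w 0 (enum_rank e2) = 0].
Proof.
move=> conn' nbip'.
(* The row (1, 0, 0) lies in the row space of A = [c_e1 c_e2 N]; its coefficients give w. *)
pose c e : 'cV[R]_#|{: edge adj}| := delta_mx (enum_rank e) 0.
pose A := row_mx (row_mx (c e1) (c e2)) (incidence adj R).
have : (row_mx (row_mx 1 0) 0 <= A)%MS.
  apply: annihilators_submx => u; rewrite -[u]vsubmxK -[usubmx u]vsubmxK.
  move: (usubmx (usubmx u)) (dsubmx (usubmx u)) (dsubmx u) => s r z.
  rewrite !mul_row_col !mul0mx !addr0 mul1mx => /eqP; rewrite addrC addr_eq0 => /eqP Nz.
  have Nz_at e x y : adj x y -> val e = [set x; y] ->
      z (enum_rank x) 0 + z (enum_rank y) 0 =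
      - ((e == e1)%:R * s 0 0 + (e == e2)%:R * r 0 0).
    move=> xy e_xy; move/colP/(_ (enum_rank e)): Nz.
    rewrite (incidence_mul_col adj_simple _ xy e_xy) => ->.
    by rewrite !mxE !big_ord1 !mxE !(inj_eq enum_rank_inj) !andbT.
  have z0 v : z (enum_rank v) 0 = 0.
    apply: (alternating_eq0 (z := fun v => z (enum_rank v) 0) conn' nbip').
    move=> x y /and3P[xy e1_xy e2_xy].
    pose e : edge adj := exist _ [set x; y] (mem_edgeset xy).
    have [/= ne1 ne2] : (e == e1) = false /\ (e == e2) = false.
      by split; [apply: contraNF e1_xy | apply: contraNF e2_xy] => /eqP <-.
    by rewrite (Nz_at e x y xy erefl) ne1 ne2 !mul0r addr0 oppr0.
  have [a [b [ab e1_ab]]] := edge_set2 e1.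
  have := Nz_at e1 a b ab e1_ab; rewrite !z0 eqxx (negbTE e1_neq_e2) mul1r mul0r.
  rewrite !addr0 => /esym/eqP; rewrite oppr_eq0 => /eqP s0.
  by apply/matrixP => i j; rewrite !ord1 s0 mxE.
case/submxP => w; rewrite !mul_mx_row => /eq_row_mx[/eq_row_mx[w_e1 w_e2] wN].
by exists w; split; [| move/matrixP: w_e1 | move/matrixP: w_e2] => //;
  move/(_ 0 0); rewrite /c -colE !mxE.
Qed.

End DeletedEdges.

Theorem mainTheorem14 (R : realType) (V : finType) (adj : rel V)
  (e1 e2 : edge adj) :
  simple_graph adj ->
  connected_graph adj ->
  ~ bipartite adj ->
  (#|V| < #|edgeset adj|)%N ->
  e1 != e2 ->
  strongly_cospectral (line_adj R adj) (vstate R e1) (vstate R e2) ->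
  ~ connected_graph (delete2 adj (val e1) (val e2)) \/
  bipartite (delete2 adj (val e1) (val e2)).
Proof.
move=> adj_simple _ _ _ e1_neq_e2 e12_sc.
have [|nbip'] := classic (bipartite (delete2 adj (val e1) (val e2))); first by right.
left=> conn'.
have [w [wN w_e1 w_e2]] := exists_incidence_kernel_row R adj_simple e1_neq_e2 conn' nbip'.
have w_neq0 : w != 0 by apply: contra_eq_neq w_e1 => ->; rewrite mxE eq_sym oner_neq0.
have w_eig := incidence_kernel_eigen adj_simple wN.
have := strongly_cospectral_eigenvector e12_sc w_neq0 w_eig.
by case=> /matrixP/(_ 0 0); rewrite /vstate -!rowE !mxE w_e1 w_e2 ?oppr0 => /eqP;
  rewrite oner_eq0.
Qed.
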